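(* Let $\mathcal{H}$ be a real Hilbert space, let $\Gamma\subseteq\mathbb{R}_{++}$ be nonempty, let $\alpha\in(0,1)$ and let $(T_\gamma)_{\gamma\in\Gamma}$ be a family of $\alpha$-averaged nonexpansive operators $\mathcal{H}\to\mathcal{H}$ with $\operatorname{Fix}T_\gamma\neq\emptyset$ for all $\gamma\in\Gamma$. Let $(\mathcal{Q}_{\delta\leftarrow\gamma})_{\gamma,\delta\in\Gamma}$ be fixed-point relocators for $(T_\gamma)_{\gamma\in\Gamma}$ with Lipschitz constants $(\mathcal{L}_{\delta\leftarrow\gamma})_{\gamma,\delta\in\Gamma}$ in $[1,+\infty)$. Suppose that: (1) for each bounded subset $S\subseteq\bigcup_{\gamma\in\Gamma}(\operatorname{Fix}T_\gamma\times\{\gamma\})$ there exists $L>0$ with $\|\mathcal{Q}_{\delta\leftarrow\gamma}x-\mathcal{Q}_{\gamma\leftarrow\gamma}x\|\le L|\delta-\gamma|$ for all $\delta\in\Gamma$ and all $(x,\gamma)\in S$; (2) the map $\mathcal{H}\times\Gamma\to\mathcal{H}$, $(x,\gamma)\mapsto T_\gamma x$, is continuous; (3) $(T_\gamma)_{\gamma\in\Gamma}$ is uniformly boundedly linearly regular; (4) $(\gamma_n)_{n\in\mathbb{N}}\subseteq\Gamma$ converges $R$-linearly to some $\gamma^*\in\Gamma$, and $\sum_{n\in\mathbb{N}}(\mathcal{L}_{\gamma_{n+1}\leftarrow\gamma_n}-1)<+\infty$. Given $x_0\in\mathcal{H}$, define $x_{n+1}:=\mathcal{Q}_{\gamma_{n+1}\leftarrow\gamma_n}T_{\gamma_n}x_n$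 for all $n\in\mathbb{N}$. Then: (i) $(\operatorname{dist}(x_n,\operatorname{Fix}T_{\gamma_n}))_{n\in\mathbb{N}}$ converges $R$-linearly to zero; (ii) $(x_n)_{n\in\mathbb{N}}$ and $(T_{\gamma_n}x_n)_{n\in\mathbb{N}}$ converge $R$-linearly to the same point in $\operatorname{Fix}T_{\gamma^*}$.
   Context: An operator $T:\mathcal{H}\to\mathcal{H}$ is $\alpha$-averaged nonexpansive ($\alpha\in(0,1)$) if $\|Tx-Ty\|^2+\frac{1-\alpha}{\alpha}\|(x-Tx)-(y-Ty)\|^2\le\|x-y\|^2$ for all $x,y$. $\operatorname{Fix}T=\{x: Tx=x\}$, and $\operatorname{dist}(x,C)=\inf_{y\in C}\|x-y\|$. Fixed-point relocators: given a nonempty $\Gamma\subseteq\mathbb{R}_{++}$ and operators $(T_\gamma)_{\gamma\in\Gamma}$ on $\mathcal{H}$, a family of operators $(\mathcal{Q}_{\delta\leftarrow\gamma})_{\delta,\gamma\in\Gamma}$ on $\mathcal{H}$ is called fixed-point relocators for $(T_\gamma)$ with Lipschitz constants $(\mathcal{L}_{\delta\leftarrow\gamma})$ in $[1,\infty)$ if: (a) for all $\gamma,\delta\in\Gamma$, the restriction of $\mathcal{Q}_{\delta\leftarrow\gamma}$ to $\operatorname{Fix}T_\gamma$ is a bijection from $\operatorname{Fix}T_\gamma$ onto $\operatorname{Fix}T_\delta$; (b) for all $\gamma\in\Gamma$ and $x\in\operatorname{Fix}T_\gamma$, the map $\Gamma\to\mathcal{H}$, $\delta\mapsto\mathcal{Q}_{\delta\leftarrow\gamma}x$,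 is continuous; (c) for all $\gamma,\delta,\epsilon\in\Gamma$ and $x\in\operatorname{Fix}T_\gamma$, $\mathcal{Q}_{\epsilon\leftarrow\delta}\mathcal{Q}_{\delta\leftarrow\gamma}x=\mathcal{Q}_{\epsilon\leftarrow\gamma}x$; (d) each $\mathcal{Q}_{\delta\leftarrow\gamma}$ is $\mathcal{L}_{\delta\leftarrow\gamma}$-Lipschitz continuous. Uniform bounded linear regularity: $(T_\gamma)_{\gamma\in\Gamma}$ is uniformly boundedly linearly regular if for every nonempty bounded $S\subseteq\mathcal{H}$ there is $\kappa>0$ with $\operatorname{dist}(x,\operatorname{Fix}T_\gamma)\le\kappa\|x-T_\gamma x\|$ for all $x\in S$ and all $\gamma\in\Gamma$. A sequence $(a_n)$ converges $R$-linearly to $a$ if there exist $C\ge 0$ and $r\in(0,1)$ with $\|a_n-a\|\le Cr^n$ for all $n$. *)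

From HB Require Import structures.
From mathcomp Require Import all_boot all_order all_algebra.
From mathcomp Require Import all_classical all_reals all_analysis.
Set Implicit Arguments. Unset Strict Implicit. Unset Printing Implicit Defensive.
Import Order.TTheory GRing.Theory Num.Theory.
Import numFieldNormedType.Exports.
Local Open Scope classical_set_scope.
Local Open Scope ring_scope.

(* A real Hilbert space is represented as a complete normed space H over
   R : realType together with an inner product ip inducing its norm. *)
Definition is_inner_product (R : realType) (H : normedModType R)
  (ip : H -> H -> R) : Prop :=
  [/\ (forall x y, ip x y = ip y x),
      (forall a x y z, ip (a *: x + y) z = a * ip x z + ip y z) &
      (forall x, ip x x = `|x| ^+ 2)].

Definition Fix (T : Type) (f : T -> T) : set T := [set x | f x = x].

Definition dist (R : realType) (H : normedModType R) (x : H) (C : set H) : R :=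
  inf [set `|x - y| | y in C].

Definition averaged (R : realType) (H : normedModType R) (alpha : R)
  (T : H -> H) : Prop :=
  forall x y, `|T x - T y| ^+ 2 + (1 - alpha) / alpha * `|(x - T x) - (y - T y)| ^+ 2
              <= `|x - y| ^+ 2.

(* Fixed-point relocators (Q d g = Q_{d <- g}) with Lipschitz constants L d g
   in [1, +oo), for the family (T g)_{g in Gamma}. *)
Definition fixed_point_relocators (R : realType) (H : normedModType R)
  (Gamma : set R) (T : R -> H -> H) (Q : R -> R -> H -> H) (L : R -> R -> R)
  : Prop :=
  [/\
      (forall g d, Gamma g -> Gamma d -> 1 <= L d g),
      (forall g d, Gamma g -> Gamma d ->
         [/\ (forall x, Fix (T g) x -> Fix (T d) (Q d g x)),
             (forall x y, Fix (T g) x -> Fix (T g) y -> Q d g x = Q d g y -> x = y) &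
             (forall z, Fix (T d) z -> exists2 x, Fix (T g) x & Q d g x = z)]),
      (forall g x, Gamma g -> Fix (T g) x ->
         {within Gamma, continuous (fun d => Q d g x)}),
      (forall g d e x, Gamma g -> Gamma d -> Gamma e -> Fix (T g) x ->
         Q e d (Q d g x) = Q e g x) &
      (forall g d, Gamma g -> Gamma d ->
         forall x y, `|Q d g x - Q d g y| <= L d g * `|x - y|)].

Definition bounded_setH (R : realType) (H : normedModType R) (S : set H) : Prop :=
  exists M : R, forall x, S x -> `|x| <= M.

Definition bounded_setHR (R : realType) (H : normedModType R) (S : set (H * R))
  : Prop :=
  exists M : R, forall p, S p -> `|p.1| <= M /\ `|p.2| <= M.

Definition uniformly_boundedly_linearly_regular (R : realType)
  (H : normedModType R) (Gamma : set R) (T : R -> H -> H) : Prop :=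
  forall S : set H, S !=set0 -> bounded_setH S ->
    exists2 kappa : R, 0 < kappa &
      forall x g, S x -> Gamma g -> dist x (Fix (T g)) <= kappa * `|x - T g x|.

Definition R_linear_cvg (R : realType) (V : normedModType R) (a : nat -> V)
  (l : V) : Prop :=
  exists C : R, exists r : R,
    [/\ 0 <= C, 0 < r, r < 1 & forall n, `|a n - l| <= C * r ^+ n].

From HB Require Import structures.
From mathcomp Require Import all_boot all_order all_algebra.
From mathcomp Require Import all_classical all_reals all_analysis.
From mathcomp Require Import ring lra.
Set Implicit Arguments. Unset Strict Implicit. Unset Printing Implicit Defensive.
Import Order.TTheory GRing.Theory Num.Theory.
Import numFieldNormedType.Exports.
Local Open Scope classical_set_scope.
Local Open Scope ring_scope.

(* By averagedness, |T x - y|^2 <= |x - y|^2 - c |x - T x|^2 for every fixed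
   point y, so on a bounded set, where bounded linear regularity gives
   dist(x, Fix T) <= kappa |x - T x|, one step of any T_gamma contracts the
   distance to its fixed points by a factor rho < 1 depending only on alpha
   and kappa.  Relocation multiplies that distance by at most L_{n+1<-n},
   and the products of these constants stay bounded because the excesses
   L_{n+1<-n} - 1 are summable; hence dist(x_n, Fix T_{gamma_n}) decays like
   rho^n.  The orbit is bounded since it stays within a bounded factor of the
   relocated fixed points Q_{gamma_n<-gamma_0} p_0, which themselves move by
   at most a multiple of |gamma_n - gamma_0|.  Picking fixed points q_n close
   to x_n, the step x_{n+1} - x_n splits into a Lipschitz image of T x_n - q_n,
   the relocation shift Q_{gamma_{n+1}<-gamma_n} q_n - q_n (bounded by
   hypothesis (1) by a multiple of |gamma_{n+1} - gamma_n|) and q_n - x_n, all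
   R-linearly small; so (x_n) is Cauchy with an R-linear rate, T x_n stays
   within 2|x_n - q_n| of x_n, and continuity (2) puts the common limit in
   Fix T_{gamma*}. *)

Section Distance.
Variables (R : realType) (V : normedModType R).
Implicit Types (x y : V) (C : set V).

Let dist_has_lbound x C : has_lbound [set `|x - y| | y in C].
Proof. by exists 0 => _ [y _ <-]. Qed.

Lemma dist_le x C y : C y -> dist x C <= `|x - y|.
Proof. by move=> Cy; apply: ge_inf; [exact: dist_has_lbound | exists y]. Qed.

Lemma lb_le_dist x C a : C !=set0 ->
  (forall y, C y -> a <= `|x - y|) -> a <= dist x C.
Proof.
move=> [y Cy] lb; apply: lb_le_inf; first by exists `|x - y|, y.
by move=> _ [z Cz <-]; exact: lb.
Qed.

Lemma dist_ge0 x C : C !=set0 -> 0 <= dist x C.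
Proof. by move=> C0; apply: lb_le_dist. Qed.

Lemma dist_adherent x C e : C !=set0 -> 0 < e ->
  exists2 y, C y & `|x - y| < dist x C + e.
Proof.
move=> [y Cy] e0; have [_ [z Cz <-] ?] := @inf_adherent _ _ e e0
  (conj (ex_intro _ `|x - y| (ex_intro2 _ _ y Cy erefl)) (dist_has_lbound x C)).
by exists z.
Qed.

End Distance.

Section Averaged.
Variables (R : realType) (V : normedModType R).

Lemma averaged_nonexpansive (alpha : R) (T : V -> V) :
  0 < alpha <= 1 -> averaged alpha T -> forall u v, `|T u - T v| <= `|u - v|.
Proof.
move=> /andP[a0 a1] avT u v; rewrite -(@ler_pXn2r _ 2) ?nnegrE//.
have c0 : 0 <= (1 - alpha) / alpha by rewrite divr_ge0 ?subr_ge0 // ltW.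
by apply: le_trans (avT u v); rewrite lerDl mulr_ge0 ?exprn_ge0.
Qed.

(* rho = 1 - th / 2 with th = c / (c + kappa^2), c = (1 - alpha) / alpha:
   the squared distance shrinks by 1 - th, and sqrt (1 - th) <= 1 - th / 2. *)
Lemma averaged_regular_dist_contraction (alpha kappa : R) :
  0 < alpha < 1 -> 0 < kappa ->
  exists2 rho : R, 0 < rho < 1 & forall (T : V -> V) x,
    averaged alpha T -> Fix T !=set0 ->
    dist x (Fix T) <= kappa * `|x - T x| ->
    dist (T x) (Fix T) <= rho * dist x (Fix T).
Proof.
move=> /andP[a0 a1] k0; set c := (1 - alpha) / alpha.
have c0 : 0 < c by rewrite divr_gt0// subr_gt0.
set th := c / (c + kappa ^+ 2).
have k20 : 0 < kappa ^+ 2 by rewrite exprn_gt0.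
have th0 : 0 < th by rewrite divr_gt0// addr_gt0.
have th1 : th < 1 by rewrite ltr_pdivrMr ?addr_gt0// mul1r ltrDl.
have thk : th * kappa ^+ 2 <= c.
  by rewrite /th mulrAC ler_pdivrMr ?addr_gt0// ler_pM2l// lerDr ltW.
exists (1 - th / 2); first by apply/andP; split; lra.
move=> T x avT F0 reg; set d := dist x (Fix T); set D := dist (T x) (Fix T).
have d0 : 0 <= d := dist_ge0 x F0.
have D0 : 0 <= D := dist_ge0 (T x) F0.
have descent y : Fix T y -> D ^+ 2 + th * d ^+ 2 <= `|x - y| ^+ 2.
  move=> Fy; have := avT x y; rewrite -/c Fy subrr subr0 => avxy.
  have : D ^+ 2 <= `|T x - y| ^+ 2 by rewrite lerXn2r ?nnegrE// dist_le.
  have : th * d ^+ 2 <= c * `|x - T x| ^+ 2.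
    apply: le_trans (_ : th * (kappa * `|x - T x|) ^+ 2 <= _).
      by rewrite ler_pM2l// lerXn2r ?nnegrE// (mulr_ge0 (ltW k0)).
    by rewrite exprMn mulrA ler_wpM2r.
  lra.
have sum0 : 0 <= D ^+ 2 + th * d ^+ 2.
  by rewrite addr_ge0 ?sqr_ge0 // mulr_ge0 ?sqr_ge0 // ltW.
have : Num.sqrt (D ^+ 2 + th * d ^+ 2) <= d.
  apply: lb_le_dist => // y Fy; rewrite -(@ler_pXn2r _ 2) ?nnegrE ?sqrtr_ge0//.
  by rewrite sqr_sqrtr ?descent.
rewrite -(@ler_pXn2r _ 2) ?nnegrE ?sqrtr_ge0// sqr_sqrtr// => Dd.
rewrite -(@ler_pXn2r _ 2) ?nnegrE ?mulr_ge0//; last lra.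
rewrite exprMn; nra.
Qed.

End Averaged.

Section Relocators.
Variables (R : realType) (V : normedModType R) (Gamma : set R).
Variables (T : R -> V -> V) (Q : R -> R -> V -> V) (L : R -> R -> R).
Hypothesis QL : fixed_point_relocators Gamma T Q L.

Lemma relocator_fix g d x :
  Gamma g -> Gamma d -> Fix (T g) x -> Fix (T d) (Q d g x).
Proof. by case: QL => _ bij _ _ _ Gg Gd; have [inF _ _] := bij g d Gg Gd; exact: inF. Qed.

Lemma relocator_id g x : Gamma g -> Fix (T g) x -> Q g g x = x.
Proof.
case: QL => _ bij _ comp _ Gg Fx; have [inF inj _] := bij g g Gg Gg.
by apply: inj => //; [exact: inF | rewrite comp].
Qed.

Lemma relocator_comp g d e x : Gamma g -> Gamma d -> Gamma e -> Fix (T g) x ->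
  Q e d (Q d g x) = Q e g x.
Proof. by case: QL => _ _ _ comp _; exact: comp. Qed.

Lemma relocator_lipschitz g d x y : Gamma g -> Gamma d ->
  `|Q d g x - Q d g y| <= L d g * `|x - y|.
Proof. by case: QL => _ _ _ _ lip Gg Gd; exact: lip. Qed.

Lemma relocator_const_ge1 g d : Gamma g -> Gamma d -> 1 <= L d g.
Proof. by case: QL => L1 _ _ _ _; exact: L1. Qed.

Lemma dist_relocator g d x : Gamma g -> Gamma d -> Fix (T g) !=set0 ->
  dist (Q d g x) (Fix (T d)) <= L d g * dist x (Fix (T g)).
Proof.
move=> Gg Gd F0.
have L0 : 0 < L d g := lt_le_trans ltr01 (relocator_const_ge1 Gg Gd).
rewrite mulrC -ler_pdivrMr//; apply: lb_le_dist => // y Fy.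
rewrite ler_pdivrMr// mulrC; apply: le_trans (relocator_lipschitz x y Gg Gd).
exact/dist_le/relocator_fix.
Qed.

End Relocators.

Section RLinearConvergence.
Variables (R : realType) (V : normedModType R).
Implicit Types (a b : nat -> V) (l : V).

Lemma R_linear_cvg_subr a l :
  R_linear_cvg a l <-> R_linear_cvg (fun n => a n - l) 0.
Proof.
by split=> -[C [r [C0 r0 r1 ub]]]; exists C, r; split=> // n;
  move: (ub n); rewrite subr0.
Qed.

Lemma R_linear_cvg_geometric (r : R) :
  0 < r < 1 -> R_linear_cvg (fun n => r ^+ n) 0.
Proof.
case/andP=> r0 r1; exists 1, r; split=> // n.
by rewrite subr0 mul1r ger0_norm ?exprn_ge0 ?(ltW r0).
Qed.

Lemma R_linear_cvg0D a b : R_linear_cvg a 0 -> R_linear_cvg b 0 ->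
  R_linear_cvg (fun n => a n + b n) 0.
Proof.
move=> [C [r [C0 r0 r1 ua]]] [D [s [D0 s0 s1 ub]]].
exists (C + D), (Num.max r s); split; rewrite ?addr_ge0 ?lt_max ?gt_max ?r0 ?r1 ?s1//.
have le_max_pow t m : 0 < t -> t <= Num.max r s -> t ^+ m <= Num.max r s ^+ m.
  by move=> t0 tm; rewrite lerXn2r ?nnegrE ?(ltW t0) ?(le_trans (ltW t0) tm).
move=> n; move: (ua n) (ub n); rewrite !subr0 mulrDl => uan ubn.
apply: le_trans (ler_normD _ _) _; apply: lerD.
- by apply: le_trans uan _; rewrite ler_wpM2l// le_max_pow// le_max lexx.
- by apply: le_trans ubn _; rewrite ler_wpM2l// le_max_pow// le_max lexx orbT.
Qed.

Lemma R_linear_cvg_steps a l : R_linear_cvg a l ->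
  R_linear_cvg (fun n => a n.+1 - a n) 0.
Proof.
move=> [C [r [C0 r0 r1 ua]]]; exists (2 * C), r; split; rewrite ?mulr_ge0// => n.
have -> : a n.+1 - a n - 0 = (a n.+1 - l) - (a n - l) by rewrite subr0 opprB addrA subrK.
apply: le_trans (ler_normB _ _) _.
have rSn : r ^+ n.+1 <= r ^+ n by rewrite exprS ler_piMl ?exprn_ge0 ?ltW.
have := ua n; have := ua n.+1; have := ler_wpM2l C0 rSn; lra.
Qed.

Lemma R_linear_cvg_bounded a l :
  R_linear_cvg a l -> exists M, forall n, `|a n| <= M.
Proof.
move=> [C [r [C0 r0 r1 ua]]]; exists (C + `|l|) => n.
rewrite -(subrK l (a n)); apply: le_trans (ler_normD _ _) _; rewrite lerD2r.
apply: le_trans (ua n) _; rewrite ler_piMr// exprn_ile1 ?ltW//.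
Qed.

Lemma R_linear_cvg_cvg a l : R_linear_cvg a l -> a @ \oo --> l.
Proof.
move=> [C [r [C0 r0 r1 ua]]]; apply/cvgrPdist_le => e e0.
have rn0 : geometric C r n @[n --> \oo] --> 0.
  by apply: cvg_geometric; rewrite gtr0_norm.
near=> n; rewrite distrC; apply: le_trans (ua n) (le_trans (ler_norm _) _).
by near: n; move/cvgr0Pnorm_le : rn0; apply.
Unshelve. all: by end_near.
Qed.

Lemma R_linear_cvg0_le (U : normedModType R) (a : nat -> U) b k : 0 <= k ->
  (forall n, `|b n| <= k * `|a n|) -> R_linear_cvg a 0 -> R_linear_cvg b 0.
Proof.
move=> k0 ub [C [r [C0 r0 r1 ua]]]; exists (k * C), r; split; rewrite ?mulr_ge0// => n.
by rewrite subr0 -mulrA (le_trans (ub n))// ler_wpM2l// -(subr0 (a n)).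
Qed.

End RLinearConvergence.

Lemma R_linear_cvg0_norm (R : realType) (V : normedModType R) (a : nat -> V) :
  R_linear_cvg a 0 -> R_linear_cvg (fun n => `|a n|) 0.
Proof. by apply: R_linear_cvg0_le ler01 _ => n; rewrite normr_id mul1r. Qed.

Lemma cvgn_within (T : topologicalType) (A : set T) (u : nat -> T) (l : T) :
  (forall n, A (u n)) -> u @ \oo --> l -> u @ \oo --> within A (nbhs l).
Proof. by move=> Au ul U /ul; apply: (@filterS _ \oo) => n /=; apply. Qed.

Section Completeness.
Variables (R : realType) (H : completeNormedModType R).
Implicit Types (u : nat -> H).

Lemma geometric_steps_dist u (K s : R) : 0 <= K -> 0 <= s < 1 ->
  (forall n, `|u n.+1 - u n| <= K * s ^+ n) ->
  forall n m, (n <= m)%N -> `|u m - u n| <= K / (1 - s) * s ^+ n.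
Proof.
move=> K0 /andP[s0 s1] steps n m /subnKC <-; set K' := K / (1 - s).
suff tail k : `|u (n + k)%N - u n| <= K' * (s ^+ n - s ^+ (n + k)).
  apply: le_trans (tail _) _.
  by rewrite ler_wpM2l ?divr_ge0 ?subr_ge0 ?(ltW s1)// gerBl exprn_ge0.
elim: k => [|k IH]; first by rewrite addn0 !subrr normr0 mulr0.
rewrite addnS -(subrK (u (n + k)%N) (u (n + k).+1)) -addrA.
apply: le_trans (ler_normD _ _) (le_trans (lerD (steps _) IH) _).
rewrite le_eqVlt; apply/orP; left; apply/eqP.
by rewrite /K' exprS; field; rewrite subr_eq0 gt_eqF.
Qed.

Lemma R_linear_cvg_of_steps u :
  R_linear_cvg (fun n => u n.+1 - u n) 0 -> exists l, R_linear_cvg u l.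
Proof.
move=> [K [s [K0 s0 s1 us]]].
have steps n : `|u n.+1 - u n| <= K * s ^+ n by move: (us n); rewrite subr0.
have s01 : 0 <= s < 1 by rewrite ltW.
have tail := geometric_steps_dist K0 s01 steps.
set K' := K / (1 - s).
have Ks0 : geometric K' s n @[n --> \oo] --> 0.
  by apply: cvg_geometric; rewrite gtr0_norm.
have /cauchy_cvg uc : cauchy (u @ \oo).
  apply: cauchy_exP => e e0; have /cvgr0Pnorm_lt/(_ e e0) [N _ KsN] := Ks0.
  exists (u N); exists N => // n /= Nn; rewrite -ball_normE /= distrC.
  exact: le_lt_trans (tail _ _ Nn) (le_lt_trans (ler_norm _) (KsN N (leqnn N))).
exists (lim (u @ \oo)), K', s; split; rewrite ?divr_ge0 ?subr_ge0 ?(ltW s1)// => n.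
apply: (closed_cvg (closed_ball_ Num.norm (u n) (K' * s ^+ n))) uc.
  exact: closed_closed_ball_.
near=> m; rewrite /closed_ball_ /= distrC; apply: tail; near: m; exact: nbhs_infty_ge.
Unshelve. all: by end_near.
Qed.

End Completeness.

Lemma prod_bounded_of_summable (R : realType) (a : nat -> R) :
  (forall k, 1 <= a k) -> (\sum_(0 <= k <oo) ((a k - 1)%:E) < +oo)%E ->
  exists B, forall n, 1 <= \prod_(0 <= k < n) a k <= B.
Proof.
move=> a1 sum_fin; set E := (\sum_(0 <= k <oo) ((a k - 1)%:E))%E.
have E0 : (0 <= E)%E by apply: nneseries_ge0 => k _; rewrite lee_fin subr_ge0.
have Efin : E \is a fin_num by rewrite ge0_fin_numE.
exists (expR (fine E)) => n; apply/andP; split.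
  elim: n => [|n IH]; first by rewrite big_geq.
  by rewrite big_nat_recr//= mulr_ege1.
have sumE : \sum_(0 <= k < n) (a k - 1) <= fine E.
  rewrite -lee_fin -sumEFin fineK//.
  by apply: nneseries_lim_ge => k _ _; rewrite lee_fin subr_ge0.
apply: le_trans (_ : _ <= expR (\sum_(0 <= k < n) (a k - 1))) _; last by rewrite ler_expR.
rewrite expR_sum; apply: ler_prod => k _; rewrite (le_trans ler01 (a1 k))/=.
by rewrite -[leLHS](subrK 1) addrC expR_ge1Dx.
Qed.

Section RelocatedIteration.
Variables (R : realType) (H : completeNormedModType R) (Gamma : set R) (alpha : R).
Variables (T : R -> H -> H) (Q : R -> R -> H -> H) (L : R -> R -> R).
Variables (gamma : nat -> R) (gstar : R) (x : nat -> H).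
Hypothesis alpha01 : 0 < alpha < 1.
Hypothesis T_averaged : forall g, Gamma g -> averaged alpha (T g).
Hypothesis Fix_neq0 : forall g, Gamma g -> Fix (T g) !=set0.
Hypothesis QL : fixed_point_relocators Gamma T Q L.
Hypothesis Q_local_lipschitz : forall S : set (H * R),
  S `<=` [set p | Gamma p.2 /\ Fix (T p.2) p.1] -> bounded_setHR S ->
  exists2 Lc : R, 0 < Lc & forall d p, Gamma d -> S p ->
    `|Q d p.2 p.1 - Q p.2 p.2 p.1| <= Lc * `|d - p.2|.
Hypothesis T_continuous :
  {within [set p : H * R | Gamma p.2], continuous (fun p => T p.2 p.1)}.
Hypothesis T_regular : uniformly_boundedly_linearly_regular Gamma T.
Hypothesis gamma_in : forall n, Gamma (gamma n).
Hypothesis gstar_in : Gamma gstar.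
Hypothesis gamma_cvg : R_linear_cvg gamma gstar.
Hypothesis L_summable :
  (\sum_(0 <= n <oo) ((L (gamma n.+1) (gamma n) - 1)%:E) < +oo)%E.
Hypothesis x_next : forall n, x n.+1 = Q (gamma n.+1) (gamma n) (T (gamma n) (x n)).

Let T_nonexpansive n u v : `|T (gamma n) u - T (gamma n) v| <= `|u - v|.
Proof.
have [a0 a1] := andP alpha01.
by apply: (averaged_nonexpansive _ (T_averaged (gamma_in n))); rewrite a0 ltW.
Qed.

Let L_ge0 n : 0 <= L (gamma n.+1) (gamma n).
Proof. exact: le_trans ler01 (relocator_const_ge1 QL (gamma_in n) (gamma_in n.+1)). Qed.

Lemma relocation_products_bounded : exists2 B,
  forall n, \prod_(0 <= k < n) L (gamma k.+1) (gamma k) <= B &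
  forall n, L (gamma n.+1) (gamma n) <= B.
Proof.
have L1 k : 1 <= L (gamma k.+1) (gamma k) :=
  relocator_const_ge1 QL (gamma_in k) (gamma_in k.+1).
have [B PB] := prod_bounded_of_summable L1 L_summable.
exists B => n; first by case/andP: (PB n).
have /andP[P1 _] := PB n; have /andP[_ PSB] := PB n.+1.
by apply: le_trans PSB; rewrite big_nat_recr//= ler_peMl// (le_trans ler01).
Qed.

Lemma relocation_lipschitz_along (q : nat -> H) (g : nat -> R) :
  (forall n, Gamma (g n) /\ Fix (T (g n)) (q n)) ->
  (exists M, forall n, `|q n| <= M) -> (exists M, forall n, `|g n| <= M) ->
  exists2 Lc, 0 < Lc &
    forall n d, Gamma d -> `|Q d (g n) (q n) - q n| <= Lc * `|d - g n|.
Proof.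
move=> gqF [Mq qM] [Mg gM].
set S := range (fun n => (q n, g n)).
have S_fix : S `<=` [set p | Gamma p.2 /\ Fix (T p.2) p.1].
  by move=> _ [n _ <-]; exact: gqF.
have S_bounded : bounded_setHR S.
  by exists (Num.max Mq Mg) => _ [n _ <-] /=; split; rewrite le_max ?qM ?gM ?orbT.
have [Lc Lc0 Qlip] := Q_local_lipschitz S_fix S_bounded.
exists Lc => // n d Gd; have [Ggn Fqn] := gqF n.
rewrite -{2}(relocator_id QL Ggn Fqn).
exact: Qlip d (q n, g n) Gd (ex_intro2 _ _ n I erefl).
Qed.

Lemma orbit_bounded : exists M, forall n, `|x n| <= M.
Proof.
have [B PB _] := relocation_products_bounded.
have [Mg gM] := R_linear_cvg_bounded gamma_cvg.
have [p0 Fp0] := Fix_neq0 (gamma_in 0).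
pose p n := Q (gamma n) (gamma 0) p0.
have pF n : Fix (T (gamma n)) (p n) := relocator_fix QL (gamma_in 0) (gamma_in n) Fp0.
have x_near_p n :
    `|x n - p n| <= \prod_(0 <= k < n) L (gamma k.+1) (gamma k) * `|x 0 - p 0|.
  elim: n => [|n IH]; first by rewrite big_geq// mul1r.
  rewrite x_next /p -(relocator_comp QL (gamma_in 0) (gamma_in n) (gamma_in n.+1) Fp0).
  apply: le_trans (relocator_lipschitz QL _ _ (gamma_in n) (gamma_in n.+1)) _.
  rewrite big_nat_recr//= (mulrC _ (L _ _)) -mulrA ler_wpM2l//.
  by rewrite -/(p n) -(pF n); exact: le_trans (T_nonexpansive _ _ _) IH.
have p0_fix : nat -> Gamma (gamma 0) /\ Fix (T (gamma 0)) p0 by split.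
have p0_bounded : exists M, nat -> `|p0| <= M by exists `|p0|.
have g0_bounded : exists M, nat -> `|gamma 0| <= M by exists `|gamma 0|.
have [Lc Lc0 Qlip] := relocation_lipschitz_along p0_fix p0_bounded g0_bounded.
exists (B * `|x 0 - p 0| + Lc * (Mg + `|gamma 0|) + `|p0|) => n.
have -> : x n = (x n - p n) + (p n - p0) + p0 by rewrite addrA subrK subrK.
apply: le_trans (ler_normD _ _) _; rewrite lerD2r.
apply: le_trans (ler_normD _ _) _; apply: lerD.
  by apply: le_trans (x_near_p n) _; rewrite ler_wpM2r.
apply: le_trans (Qlip n _ (gamma_in n)) _; rewrite ler_wpM2l ?(ltW Lc0)//.
exact: le_trans (ler_normB _ _) (lerD (gM n) (lexx _)).
Qed.

Lemma dist_orbit_R_linear : R_linear_cvg (fun n => dist (x n) (Fix (T (gamma n)))) 0.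
Proof.
have [M xM] := orbit_bounded.
have orbit_neq0 : range x !=set0 by exists (x 0), 0%N.
have orbit_bnd : bounded_setH (range x) by exists M => _ [n _ <-].
have [kappa k0 regular] := T_regular orbit_neq0 orbit_bnd.
have [rho /andP[r0 r1] contraction] := averaged_regular_dist_contraction H alpha01 k0.
have [B PB _] := relocation_products_bounded.
set d := fun n => dist (x n) (Fix (T (gamma n))).
have d0 n : 0 <= d n := dist_ge0 _ (Fix_neq0 (gamma_in n)).
have d_step n : d n.+1 <= L (gamma n.+1) (gamma n) * (rho * d n).
  rewrite /d x_next; apply: le_trans (dist_relocator QL _ (gamma_in n) (gamma_in n.+1)
    (Fix_neq0 (gamma_in n))) _.
  rewrite ler_wpM2l//.
  apply: contraction; [exact: T_averaged | exact: Fix_neq0 |].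
  by apply: regular; [exists n | exact: gamma_in].
have d_geo n : d n <= \prod_(0 <= k < n) L (gamma k.+1) (gamma k) * rho ^+ n * d 0.
  elim: n => [|n IH]; first by rewrite big_geq// expr0 !mul1r.
  apply: le_trans (d_step n) _; rewrite big_nat_recr//= exprS.
  have -> : forall P l, P * l * (rho * rho ^+ n) * d 0 = l * (rho * (P * rho ^+ n * d 0)).
    by move=> *; ring.
  by rewrite ler_wpM2l// ler_wpM2l ?(ltW r0).
apply: (R_linear_cvg0_le (k := B * d 0) _ _ (R_linear_cvg_geometric (r := rho) _)).
- by rewrite mulr_ge0// (le_trans _ (PB 0%N))// big_geq.
- move=> n; rewrite ger0_norm// ger0_norm ?exprn_ge0 ?(ltW r0)//.
  by apply: le_trans (d_geo n) _; rewrite mulrAC !ler_wpM2r ?exprn_ge0 ?(ltW r0).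
- by rewrite r0.
Qed.

Lemma orbit_near_fix : exists2 q : nat -> H,
  forall n, Fix (T (gamma n)) (q n) & R_linear_cvg (fun n => x n - q n) 0.
Proof.
(* The distance need not be attained, so q n is only 2^-n-optimal. *)
have half01 : 0 < (2^-1 : R) < 1 by rewrite invr_gt0 invf_lt1 ?ltr0n ?ltr1n.
have /choice[q qP] : forall n, exists q, Fix (T (gamma n)) q /\
    `|x n - q| < dist (x n) (Fix (T (gamma n))) + 2^-1 ^+ n.
  move=> n; have [|q ? ?] := dist_adherent (x n) (Fix_neq0 (gamma_in n)) (e := 2^-1 ^+ n).
    by rewrite exprn_gt0// (andP half01).1.
  by exists q.
exists q => [n|]; first exact: (qP n).1.
apply: (R_linear_cvg0_le ler01 _
  (R_linear_cvg0D dist_orbit_R_linear (R_linear_cvg_geometric half01))) => n.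
by rewrite mul1r (le_trans (ltW (qP n).2))// ler_norm.
Qed.

Lemma orbit_R_linear : exists xs, R_linear_cvg x xs.
Proof.
have [q qF xq] := orbit_near_fix.
have [B _ LB] := relocation_products_bounded.
have [M xM] := orbit_bounded.
have [Mw wM] := R_linear_cvg_bounded xq.
have [Mg gM] := R_linear_cvg_bounded gamma_cvg.
have gqF n : Gamma (gamma n) /\ Fix (T (gamma n)) (q n) by split.
have q_bounded : exists M, forall n, `|q n| <= M.
  exists (M + Mw) => n; rewrite -[q n](subKr (x n)).
  by apply: le_trans (ler_normB _ _) (lerD (xM n) (wM n)).
have g_bounded : exists M, forall n, `|gamma n| <= M by exists Mg.
have [Lc Lc0 Qlip] := relocation_lipschitz_along gqF q_bounded g_bounded.
apply: R_linear_cvg_of_steps.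
have B0 : 0 <= B := le_trans (L_ge0 0) (LB 0%N).
apply: (R_linear_cvg0_le (k := B + 1 + Lc) _ _ (R_linear_cvg0D (R_linear_cvg0_norm xq)
    (R_linear_cvg0_norm (R_linear_cvg_steps gamma_cvg)))) => [|n].
  by rewrite !addr_ge0 ?ler01 ?(ltW Lc0).
rewrite ger0_norm ?addr_ge0//.
have -> : x n.+1 - x n =
    (Q (gamma n.+1) (gamma n) (T (gamma n) (x n)) - Q (gamma n.+1) (gamma n) (q n))
    + (Q (gamma n.+1) (gamma n) (q n) - q n) + (q n - x n).
  by rewrite x_next !addrA !subrK.
have relocated_step : `|Q (gamma n.+1) (gamma n) (T (gamma n) (x n))
    - Q (gamma n.+1) (gamma n) (q n)| <= B * `|x n - q n|.
  apply: le_trans (relocator_lipschitz QL _ _ (gamma_in n) (gamma_in n.+1)) _.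
  apply: ler_pM => //.
  by rewrite -{1}(qF n); exact: T_nonexpansive.
have shift_step := Qlip n _ (gamma_in n.+1).
apply: le_trans (ler_normD _ _) _; apply: le_trans (lerD (ler_normD _ _) (lexx _)) _.
rewrite (distrC (q n)).
have := normr_ge0 (x n - q n); have := normr_ge0 (gamma n.+1 - gamma n).
nra.
Qed.

Lemma T_orbit_R_linear xs :
  R_linear_cvg x xs -> R_linear_cvg (fun n => T (gamma n) (x n)) xs.
Proof.
move=> /R_linear_cvg_subr xcvg; apply/R_linear_cvg_subr.
have [q qF xq] := orbit_near_fix.
have Tx_near_x : R_linear_cvg (fun n => T (gamma n) (x n) - x n) 0.
  apply: (R_linear_cvg0_le (k := 2) _ _ xq) => // n.
  rewrite -(subrK (q n) (T _ _)) -addrA mulr2n mulrDl mul1r.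
  apply: le_trans (ler_normD _ _) (lerD _ _); last by rewrite distrC.
  by rewrite -{1}(qF n); exact: T_nonexpansive.
have -> : (fun n => T (gamma n) (x n) - xs) =
    (fun n => (T (gamma n) (x n) - x n) + (x n - xs)).
  by apply/funext => n; rewrite addrA subrK.
exact: R_linear_cvg0D.
Qed.

Lemma orbit_limit_fixed xs : R_linear_cvg x xs -> Fix (T gstar) xs.
Proof.
move=> xcvg; set A := [set p : H * R | Gamma p.2].
have orbit_within : (x n, gamma n) @[n --> \oo] --> within A (nbhs (xs, gstar)).
  apply: cvgn_within => [n|]; first exact: gamma_in.
  exact: cvg_pair (R_linear_cvg_cvg xcvg) (R_linear_cvg_cvg gamma_cvg).
have T_at := (subspace_continuousP A (fun p => T p.2 p.1)).1 T_continuous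
  (xs, gstar) gstar_in.
exact: cvg_unique (cvg_comp _ _ orbit_within T_at)
  (R_linear_cvg_cvg (T_orbit_R_linear xcvg)).
Qed.

End RelocatedIteration.

Theorem theorem3p6 (R : realType) (H : completeNormedModType R)
  (ip : H -> H -> R) (Gamma : set R) (alpha : R)
  (T : R -> H -> H) (Q : R -> R -> H -> H) (L : R -> R -> R)
  (gamma : nat -> R) (gstar : R) (x : nat -> H) :
  is_inner_product ip ->
  Gamma !=set0 ->
  (forall g, Gamma g -> 0 < g) ->
  0 < alpha -> alpha < 1 ->
  (forall g, Gamma g -> averaged alpha (T g)) ->
  (forall g, Gamma g -> Fix (T g) !=set0) ->
  fixed_point_relocators Gamma T Q L ->
  (* (1) *)
  (forall S : set (H * R),
     S `<=` [set p | Gamma p.2 /\ Fix (T p.2) p.1] -> bounded_setHR S ->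
     exists2 Lc : R, 0 < Lc &
       forall d p, Gamma d -> S p ->
         `|Q d p.2 p.1 - Q p.2 p.2 p.1| <= Lc * `|d - p.2|) ->
  (* (2) *)
  {within [set p : H * R | Gamma p.2], continuous (fun p => T p.2 p.1)} ->
  (* (3) *)
  uniformly_boundedly_linearly_regular Gamma T ->
  (* (4) *)
  (forall n, Gamma (gamma n)) -> Gamma gstar ->
  R_linear_cvg gamma gstar ->
  (\sum_(0 <= n <oo) ((L (gamma n.+1) (gamma n) - 1)%:E) < +oo)%E ->
  (* iteration *)
  (forall n, x n.+1 = Q (gamma n.+1) (gamma n) (T (gamma n) (x n))) ->
  R_linear_cvg (fun n => dist (x n) (Fix (T (gamma n)))) 0
  /\ exists2 xs : H, Fix (T gstar) xs &
       R_linear_cvg x xs /\ R_linear_cvg (fun n => T (gamma n) (x n)) xs.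
Proof.
move=> _ _ _ a0 a1 Tav Fne QL Qloc Tcont Treg Gg Ggs gcvg Lsum xnext.
have a01 : 0 < alpha < 1 by rewrite a0 a1.
have [xs xcvg] := orbit_R_linear a01 Tav Fne QL Qloc Treg Gg gcvg Lsum xnext.
split; first exact: dist_orbit_R_linear a01 Tav Fne QL Qloc Treg Gg gcvg Lsum xnext.
exists xs.
  exact: (orbit_limit_fixed a01 Tav Fne QL Qloc Tcont Treg Gg Ggs gcvg Lsum xnext xcvg).
by split; last exact: (T_orbit_R_linear a01 Tav Fne QL Qloc Treg Gg gcvg Lsum xnext xcvg).
Qed.
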